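(* Let $S\subseteq X$, $\psi:S\to Z$ be $C$-convex, $x_0\in S$ and $f=\psi^C$. Then the following three conditions on $x_0$ are equivalent: (i) $f(x_0)=Z$, or for all $x\in\operatorname{dom}f$ with $f(x)\ne f(x_0)$: $0\notin f'(x_0,x-x_0)$; (ii) $f(x_0)=Z$, or for all $x\in\operatorname{dom} f$ with $f(x)\ne f(x_0)$ there is $z^*\in C^-\setminus\{0\}$ with $0<\varphi'_{f,z^*}(x_0,x-x_0)$; (iii) for all $x\in\operatorname{dom}f$ with $f(x_0)\ne f(x)$ there is $z^*\in C^-\setminus\{0\}$ with $-\infty=\varphi_{f,z^*}(x_0)<\varphi_{f,z^*}(x)$ or $0<\varphi'_{f,z^*}(x_0,x-x_0)$. In particular, if for every $x\in S$ with $\psi(x)\ne\psi(x_0)$ there exists $z\in Z$ with $z\in\psi'(x_0,x-x_0)\setminus(-C)$, then $\psi(x_0)\in\operatorname{Eff}\psi[S]$.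
   Context: $X$ real linear space, $Z$ real locally convex Hausdorff space with dual $Z^*$, $C\subseteq Z$ closed convex cone, $0\in C$, $C^-=\{z^*:z^*(c)\le0\ \forall c\in C\}$, $C^-\setminus\{0\}\ne\emptyset$. $\psi:S\to Z$ is $C$-convex if $S$ is convex and $(1-t)\psi(x_1)+t\psi(x_2)\in\psi(x_1+t(x_2-x_1))+C$. $f=\psi^C$: $f(x)=\psi(x)+C$ for $x\in S$, $\emptyset$ otherwise; $\operatorname{dom}f=S$. $A\ominus B=\{z:B+\{z\}\subseteq A\}$; $f'(x,u)=\bigcap_{t_0>0}\operatorname{cl}\operatorname{co}\bigcup_{0<t<t_0}\frac1t(f(x+tu)\ominus f(x))$. $\varphi_{f,z^*}(x)=-z^*(\psi(x))$ for $x\in S$, $+\infty$ otherwise; on $\overline{\mathbb R}$: inf-addition $\dot+$ ($(-\infty)\dot+(+\infty)=+\infty$), $r\ominus s=\inf\{t\in\mathbb R:r\le s\dot+t\}$; $\varphi'_{f,z^*}(x,u)=\inf_{t>0}\frac1t(\varphi_{f,z^*}(x+tu)\ominus\varphi_{f,z^*}(x))$. $\psi(x_0)\in\operatorname{Eff}\psi[S]$: for all $y\in\psi[S]$, $\psi(x_0)\in y+C$ implies $\psi(x_0)\in y+(C\cap-C)$. Dini derivative $\psi'(x_0,v)$: the set of limits in $\tilde Z=Z\cup Z_\infty$ of $\frac1{t_i}(\psi(x_0+t_iv)-\psi(x_0))$ along sequences $t_i\downarrow0$, where $Z_\infty$ consists of infinite elements $z_\infty$ in direction $z$ ($z_\infty=y_\infty$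 iff $y=\lambda z$, $\lambda>0$; $0_\infty=0$), $\tilde Z$ topologized by neighborhood bases $z+U$ for $z\in Z$ and $(\{tz\}+\operatorname{cone}(U+\{z\}))\cup\{a_\infty: a\in (U+\{z\})\setminus\{0\}\}$ ($t>0$) for $z_\infty$, $z\ne0$, with $U$ closed convex balanced $0$-neighborhoods. *)

From HB Require Import structures.
From mathcomp Require Import all_boot all_order all_algebra.
From mathcomp Require Import all_classical all_reals all_analysis.
Set Implicit Arguments.
Unset Strict Implicit.
Unset Printing Implicit Defensive.
Import Order.TTheory GRing.Theory Num.Theory.
Import numFieldTopology.Exports numFieldNormedType.Exports.
Local Open Scope classical_set_scope.
Local Open Scope ring_scope.

Definition is_dual (R : realType) (Z : tvsType R) (zs : Z -> R) : Prop :=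
  (forall (a : R) (x y : Z), zs (a *: x + y) = a * zs x + zs y) /\
  continuous zs.

Definition is_cone (R : realType) (Z : tvsType R) (C : set Z) : Prop :=
  forall (c : Z) (t : R), C c -> 0 < t -> C (t *: c).

Definition neg_polar (R : realType) (Z : tvsType R) (C : set Z) : set (Z -> R) :=
  [set zs | is_dual zs /\ forall c, C c -> zs c <= 0].

(** psi : S -> Z is C-convex (psi is given as a total map X -> Z; only its
    values on S matter). *)
Definition C_convex (R : realType) (X : lmodType R) (Z : tvsType R)
    (C : set Z) (S : set X) (psi : X -> Z) : Prop :=
  convex_set (S : set (convex_lmodType X)) /\
  forall (x1 x2 : X) (t : R), S x1 -> S x2 -> 0 <= t <= 1 ->
    exists2 c, C c &
      (1 - t) *: psi x1 + t *: psi x2 = psi (x1 + t *: (x2 - x1)) + c.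

Definition psiC (R : realType) (X : lmodType R) (Z : tvsType R)
    (C : set Z) (S : set X) (psi : X -> Z) : X -> set Z :=
  fun x => [set z | S x /\ exists2 c, C c & z = psi x + c].

Definition mdiff (R : realType) (Z : tvsType R) (A B : set Z) : set Z :=
  [set z | forall b, B b -> A (b + z)].

Definition scale_set (R : realType) (Z : tvsType R) (k : R) (A : set Z) : set Z :=
  [set k *: a | a in A].

Definition conv_hull (R : realType) (Z : tvsType R) (A : set Z) : set Z :=
  [set z | forall B : set Z, convex_set (B : set (convex_lmodType Z)) ->
     A `<=` B -> B z].

Definition setder (R : realType) (X : lmodType R) (Z : tvsType R)
    (f : X -> set Z) (x u : X) : set Z :=
  [set z | forall t0 : R, 0 < t0 ->
     closure (conv_hull (\bigcup_(t in [set t : R | 0 < t < t0])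
        scale_set t^-1 (mdiff (f (x + t *: u)) (f x)))) z].

Definition phi_f (R : realType) (X : lmodType R) (Z : tvsType R)
    (S : set X) (psi : X -> Z) (zs : Z -> R) (x : X) : \bar R :=
  if asbool (S x) then (- zs (psi x))%:E else +oo%E.

(** r ⊖ s = inf {t in R : r <= s ∔ t}, with ∔ the inf-addition
    ((-oo) ∔ (+oo) = +oo), which is the library's [dual_adde]. *)
Definition ediff (R : realType) (r s : \bar R) : \bar R :=
  ereal_inf [set t%:E | t in [set t : R | (r <= dual_adde s t%:E)%E]].

Definition phider (R : realType) (X : lmodType R)
    (phi : X -> \bar R) (x u : X) : \bar R :=
  ereal_inf [set ((t^-1)%:E * ediff (phi (x + t *: u)%R) (phi x))%E
            | t in [set t : R | 0 < t]].

Definition efficient (R : realType) (X : lmodType R) (Z : tvsType R)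
    (C : set Z) (S : set X) (psi : X -> Z) (x0 : X) : Prop :=
  forall y, (psi @` S) y ->
    (exists2 c, C c & psi x0 = y + c) ->
    exists2 c, (C `&` [set - d | d in C]) c & psi x0 = y + c.

(** The finite part Z ∩ psi'(x0,v) of the Dini derivative: the z in Z which
    are limits of (1/t_i)(psi(x0+t_i v) - psi(x0)) along some t_i ↓ 0. *)
Definition dini_fin (R : realType) (X : lmodType R) (Z : tvsType R)
    (psi : X -> Z) (x0 v : X) : set Z :=
  [set z | exists t : nat -> R,
     [/\ forall n, 0 < t n, forall n, t n.+1 <= t n, t @ \oo --> 0 &
         (fun n => (t n)^-1 *: (psi (x0 + t n *: v) - psi x0)) @ \oo --> z]].

From HB Require Import structures.
From mathcomp Require Import all_boot all_order all_algebra.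
From mathcomp Require Import all_classical all_reals all_analysis.
From mathcomp Require Import ring lra.
Import Order.TTheory GRing.Theory Num.Theory.
Import numFieldTopology.Exports numFieldNormedType.Exports.
Local Open Scope classical_set_scope.
Local Open Scope ring_scope.
Set Implicit Arguments.
Unset Strict Implicit.

(* For [zs] in [C^-], C-convexity of [psi] makes [t |-> - zs (psi (x0 + t u))]
   convex, so the difference quotients of [phi_f] decrease as [t] decreases to
   [0] and [phider] is their infimum.  A positive [phider] puts every
   set-valued difference quotient of [f] into a closed half-space
   [{zs <= - e}], which excludes [0] from [setder].  Conversely, if [0] is not
   in [setder], some neighbourhood of [0] misses the convex hull of the
   quotients over [0 < t < t0]; a Hahn-Banach separation yields [zs], which is
   [<= 0] on [C] since the quotient sets are stable under adding [C], and the
   monotonicity of the quotients extends its bound to all [t].  Condition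
   (iii) differs from (ii) only by cases excluded by [phi_f zs x0] being
   finite and [f x0 <> Z].  Finally, if [psi x0 = psi x + c] with [c] in [C],
   C-convexity puts every difference quotient of [psi] along [x - x0] in
   [- C], hence every finite Dini derivative lies in the closed set [- C]. *)

(** * Separation in locally convex spaces *)

Section LinearFunctional.
Variables (R : numDomainType) (V : lmodType R) (L : V -> R).
Hypothesis L_linear : forall a x y, L (a *: x + y) = a * L x + L y.

Lemma lfun0 : L 0 = 0.
Proof.
have := L_linear 1 0 0; rewrite scale1r addr0 mul1r => h.
by apply/(addrI (L 0)); rewrite addr0 -h.
Qed.

Lemma lfunD x y : L (x + y) = L x + L y.
Proof. by rewrite -{1}(scale1r x) L_linear mul1r. Qed.

Lemma lfunZ a x : L (a *: x) = a * L x.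
Proof. by rewrite -[a *: x]addr0 L_linear lfun0 addr0. Qed.

Lemma lfunN x : L (- x) = - L x.
Proof. by rewrite -scaleN1r lfunZ mulN1r. Qed.

End LinearFunctional.

Lemma convex_setP (R : realType) (M : lmodType R) (A : set M) :
  convex_set (A : set (convex_lmodType M)) <->
  forall x y t, A x -> A y -> 0 <= t -> t <= 1 -> A (t *: x + (1 - t) *: y).
Proof.
split=> [cA x y t Ax Ay t0 t1|cA x y l /set_mem Ax /set_mem Ay].
  by have := cA x y (Itv01 t0 t1) (mem_set Ax) (mem_set Ay); rewrite inE.
by apply/mem_set; exact: cA.
Qed.

Section HahnBanach.
Variables (R : realType) (V : lmodType R) (p : V -> R) (v : V).
Hypothesis p_subadd : forall x y, p (x + y) <= p x + p y.
Hypothesis p_homo : forall t x, 0 < t -> p (t *: x) = t * p x.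

Let p0 : p 0 = 0.
Proof.
have := @p_homo 2 0 (ltr0Sn R 1); rewrite scaler0 => h.
by apply/(addrI (p 0)); rewrite addr0 {3}h mulr2n mulrDl mul1r.
Qed.

(* A partial linear functional dominated by [p] is encoded by its graph.  The
   last clause of [admissible] makes [set0] admissible, as [Zorn_bigcup] needs
   for the empty chain, while forcing every other admissible graph through
   [(v, p v)]. *)
Let linear_graph (G : set (V * R)) := forall a z1 r1 z2 r2,
  G (z1, r1) -> G (z2, r2) -> G (a *: z1 + z2, a * r1 + r2).
Let dominated (G : set (V * R)) := forall z r, G (z, r) -> r <= p z.
Let admissible (G : set (V * R)) :=
  [/\ linear_graph G, dominated G & (exists zr, G zr) -> G (v, p v)].

Let linear_graphE G : linear_graph G -> forall a z1 r1 z2 r2 z r,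
  G (z1, r1) -> G (z2, r2) -> z = a *: z1 + z2 -> r = a * r1 + r2 -> G (z, r).
Proof. by move=> lG a z1 r1 z2 r2 z r G1 G2 -> ->; exact: lG. Qed.

Let admissible_bigcup (F : set (set (V * R))) : F `<=` admissible ->
  total_on F subset -> admissible (\bigcup_(G in F) G).
Proof.
move=> Fadm Ftot; split.
- move=> a z1 r1 z2 r2 [G1 FG1 G1z] [G2 FG2 G2z].
  have [G12|G21] := Ftot _ _ FG1 FG2.
    by exists G2 => //; have [lG _ _] := Fadm _ FG2; apply: lG => //; exact: G12.
  by exists G1 => //; have [lG _ _] := Fadm _ FG1; apply: lG => //; exact: G21.
- by move=> z r [G FG Gz]; have [_ dG _] := Fadm _ FG; exact: dG.
- move=> [zr [G FG Gz]]; exists G => //; have [_ _ aG] := Fadm _ FG.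
  by apply: aG; exists zr.
Qed.

Let graph_functional G : linear_graph G -> dominated G ->
  forall z r1 r2, G (z, r1) -> G (z, r2) -> r1 = r2.
Proof.
move=> lG dG z r1 r2 G1 G2.
have /dG : G (0, r1 - r2).
  by apply: (linear_graphE (a := -1) lG G2 G1); rewrite ?scaleN1r ?mulN1r addrC ?subrr.
have /dG : G (0, r2 - r1).
  by apply: (linear_graphE (a := -1) lG G1 G2); rewrite ?scaleN1r ?mulN1r addrC ?subrr.
by rewrite p0 !subr_le0 => ? ?; apply/eqP; rewrite eq_le; apply/andP.
Qed.

Let graph_scale G s a r : linear_graph G -> G (0, 0) -> G (a, r) ->
  G (s *: a, s * r).
Proof. by move=> lG G00 Gar; apply: (linear_graphE lG Gar G00); rewrite addr0. Qed.

Let extension (G : set (V * R)) (w : V) (c : R) : set (V * R) :=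
  [set zr | exists a r s, G (a, r) /\ zr = (a + s *: w, r + s * c)].

Let extension_linear G w c : linear_graph G -> linear_graph (extension G w c).
Proof.
move=> lG a z1 r1 z2 r2 [a1 [q1 [s1 [G1 [-> ->]]]]] [a2 [q2 [s2 [G2 [-> ->]]]]].
exists (a *: a1 + a2), (a * q1 + q2), (a * s1 + s2); split; first exact: lG.
congr (_, _).
  by rewrite scalerDr scalerDl scalerA -!addrA; congr (_ + _); rewrite addrCA.
by rewrite mulrDr mulrDl mulrA -!addrA; congr (_ + _); rewrite addrCA.
Qed.

(* The value [c] given to [w] must satisfy [r - p (a - w) <= c <= p (b + w) - q]
   for all [(a, r)] and [(b, q)] in the graph; such a [c] exists because [p] is
   subadditive. *)
Let extension_value G w : linear_graph G -> dominated G -> G (0, 0) ->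
  exists c, forall a r, G (a, r) -> r - p (a - w) <= c /\ c <= p (a + w) - r.
Proof.
move=> lG dG G00.
pose E := [set x | exists a r, G (a, r) /\ x = r - p (a - w)].
have Eub b q : G (b, q) -> ubound E (p (b + w) - q).
  move=> Gbq _ [a [r [Gar ->]]].
  rewrite lerBrDr addrAC lerBlDr.
  have := dG _ _ (linear_graphE (a := 1) lG Gar Gbq erefl erefl).
  rewrite scale1r mul1r => /le_trans; apply.
  by apply: le_trans (p_subadd _ _); rewrite addrCA addrK.
have hsE : has_sup E.
  split; first by exists (0 - p (0 - w)); exists 0, 0.
  by exists (p (0 + w) - 0); exact: Eub.
exists (sup E) => a r Gar; split; last exact: ge_sup hsE.1 (Eub _ _ Gar).
by apply: sup_upper_bound => //; exists a, r.
Qed.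

Let extension_dominated G w : linear_graph G -> dominated G -> G (0, 0) ->
  exists c, dominated (extension G w c).
Proof.
move=> lG dG G00; have [c hc] := extension_value w lG dG G00.
exists c => _ _ [a [r [s [Gar [-> ->]]]]].
have [s0|s0|->] := ltgtP s 0; last by rewrite scale0r mul0r !addr0; exact: dG.
- have ns0 : 0 < - s by rewrite oppr_gt0.
  have /hc[+ _] := graph_scale (- s)^-1 lG G00 Gar.
  rewrite -(ler_pM2l ns0) mulrBr mulrA mulfV ?gt_eqF // mul1r -p_homo //.
  by rewrite scalerBr scalerA mulfV ?gt_eqF // scale1r scaleNr opprK mulNr; lra.
- have /hc[_] := graph_scale s^-1 lG G00 Gar.
  rewrite lerBrDr -(ler_pM2l s0) mulrDr mulrA mulfV ?gt_eqF // mul1r.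
  by rewrite -p_homo // scalerDr scalerA mulfV ?gt_eqF // scale1r addrC.
Qed.

Let line_admissible : admissible [set zr | exists s, zr = (s *: v, s * p v)].
Proof.
split.
- move=> a z1 r1 z2 r2 [s1 [-> ->]] [s2 [-> ->]].
  by exists (a * s1 + s2); rewrite scalerDl scalerA mulrDl mulrA.
- move=> _ _ [s [-> ->]]; have [s0|s0|->] := ltgtP s 0.
  + have := p_subadd (s *: v) ((- s) *: v).
    have ns0 : 0 < - s by rewrite oppr_gt0.
    by rewrite -scalerDl subrr scale0r p0 (p_homo _ ns0) mulNr; lra.
  + by rewrite p_homo.
  + by rewrite mul0r scale0r p0.
- by move=> _; exists 1; rewrite scale1r mul1r.
Qed.

Lemma hahn_banach : exists L : V -> R,
  [/\ forall a x y, L (a *: x + y) = a * L x + L y,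
      forall x, L x <= p x & L v = p v].
Proof.
have [A [[lA dA aA] Amax]] := Zorn_bigcup admissible_bigcup.
have Av : A (v, p v).
  apply: contrapT => nAv; apply: (Amax _ _ line_admissible); split.
    by move=> zr Azr; case: nAv; apply: aA; exists zr.
  by move=> /(_ (v, p v)) h; apply/nAv/h; exists 1; rewrite scale1r mul1r.
have A00 : A (0, 0).
  by apply: (linear_graphE (a := -1) lA Av Av); rewrite ?scaleN1r ?mulN1r addNr.
have Atot w : exists r, A (w, r).
  apply: contrapT => nw; have [c dAc] := extension_dominated w lA dA A00.
  apply: (Amax (extension A w c)); last split.
  - split; first by move=> [a r] Aar; exists a, r, 0; rewrite scale0r mul0r !addr0.
    move=> /(_ (w, c)) h; apply: nw; exists c; apply: h.
    by exists 0, 0, 1; rewrite scale1r mul1r !add0r.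
  - exact: extension_linear.
  - exact: dAc.
  - by move=> _; exists v, (p v), 0; rewrite scale0r mul0r !addr0.
have [L AL] := choice Atot.
exists L; split.
- by move=> a x y; apply: (graph_functional lA dA (AL _)); exact: lA.
- by move=> x; exact: dA.
- exact: (graph_functional lA dA (AL v) Av).
Qed.

End HahnBanach.

Section MinkowskiGauge.
Variables (R : realType) (V : lmodType R) (E : set V).
Hypotheses (E_convex : convex_set (E : set (convex_lmodType V))) (E0 : E 0).
Hypothesis E_absorbing : forall z, exists2 t, 0 < t & E (t *: z).

Let gauge_set z := [set t : R | 0 < t /\ E (t^-1 *: z)].
Definition gauge z := inf (gauge_set z).

Let gauge_set_neq0 z : gauge_set z !=set0.
Proof.
have [t t0 Etz] := E_absorbing z; exists t^-1.
by split; rewrite ?invr_gt0 ?invrK.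
Qed.

Let gauge_set_lbound z : has_lbound (gauge_set z).
Proof. by exists 0 => t [/ltW]. Qed.

Let gauge_le z t : gauge_set z t -> gauge z <= t.
Proof. exact: ge_inf. Qed.

Let gauge_ge z x : (forall t, gauge_set z t -> x <= t) -> x <= gauge z.
Proof. exact: lb_le_inf. Qed.

Lemma gauge_scale t x : 0 < t -> gauge (t *: x) = t * gauge x.
Proof.
have le_scale s y : 0 < s -> gauge (s *: y) <= s * gauge y.
  move=> s0; rewrite -ler_pdivrMl //; apply: gauge_ge => r [r0 Er].
  rewrite ler_pdivrMl //; apply: gauge_le; split; first exact: mulr_gt0.
  by rewrite scalerA invfM mulrAC mulVf ?gt_eqF // mul1r.
move=> t0; apply/eqP; rewrite eq_le le_scale //=.
have := le_scale t^-1 (t *: x); rewrite invr_gt0 t0 scalerA mulVf ?gt_eqF //.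
by rewrite scale1r => /(_ isT); rewrite ler_pdivlMl.
Qed.

Lemma gauge_add x y : gauge (x + y) <= gauge x + gauge y.
Proof.
have key a b : gauge_set x a -> gauge_set y b -> gauge (x + y) <= a + b.
  move=> [a0 Ea] [b0 Eb]; apply: gauge_le; split; first exact: addr_gt0.
  have ab0 : a + b != 0 by rewrite gt_eqF ?addr_gt0.
  have h0 : 0 <= a / (a + b) by rewrite divr_ge0 // ltW ?addr_gt0.
  have h1 : a / (a + b) <= 1 by rewrite ler_pdivrMr ?addr_gt0 // mul1r lerDl ltW.
  have := (convex_setP E).1 E_convex _ _ _ Ea Eb h0 h1.
  have -> : 1 - a / (a + b) = b / (a + b) by field.
  have e1 : a / (a + b) * a^-1 = (a + b)^-1 by rewrite mulrAC mulfV ?gt_eqF // mul1r.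
  have e2 : b / (a + b) * b^-1 = (a + b)^-1 by rewrite mulrAC mulfV ?gt_eqF // mul1r.
  by rewrite !scalerA e1 e2 scalerDr.
rewrite -lerBlDr; apply: gauge_ge => a Ta; rewrite lerBlDr (addrC a) -lerBlDr.
by apply: gauge_ge => b Tb; rewrite lerBlDr (addrC b); exact: key.
Qed.

Lemma gauge_le1 z : E z -> gauge z <= 1.
Proof. by move=> Ez; apply: gauge_le; split; rewrite ?invr1 ?scale1r. Qed.

Lemma gauge_lt1 z : gauge z < 1 -> E z.
Proof.
move=> /(inf_lt (gauge_set_neq0 z)) [s [s0 Es] s1].
have := (convex_setP E).1 E_convex _ _ _ Es E0 (ltW s0) (ltW s1).
by rewrite scaler0 addr0 scalerA mulfV ?gt_eqF // scale1r.
Qed.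

End MinkowskiGauge.

Section TvsSeparation.
Variables (R : realType) (Z : tvsType R).

Lemma nbhs0_absorbing (U : set Z) :
  nbhs 0 U -> forall z, exists2 t, 0 < t & U (t *: z).
Proof.
move=> U0 z.
have : (fun k : R^o => k *: z) @ 0 --> (0 : Z).
  rewrite -(scale0r z).
  exact: cvg_comp2 cvg_id (cvg_cst _) (scale_continuous (0 : R^o, z)).
move=> /(_ _ U0) /nbhs_ballP [e e0 /= Ue].
exists (e / 2); first by rewrite divr_gt0.
apply: Ue; rewrite /ball /= sub0r normrN ger0_norm ?divr_ge0 ?ltW //.
by rewrite ltr_pdivrMr // ltr_pMr // ltr1n.
Qed.

Lemma nbhs0_convex_symmetric (N : set Z) : nbhs 0 N ->
  exists U : set Z, [/\ convex_set (U : set (convex_lmodType Z)), nbhs 0 U,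
    forall u, U u -> U (- u) & U `<=` N].
Proof.
move=> N0; have [B cB [Bo Bbasis]] := @locally_convex R Z.
have [W [BW W0] WN] := Bbasis 0 _ N0.
have cW : convex_set (W : set (convex_lmodType Z)) by exact: cB (mem_set BW).
have W_nbhs : nbhs 0 W by exact: open_nbhs_nbhs (conj (Bo _ BW) W0).
exists (W `&` [set u | W (- u)]); split.
- apply/convex_setP => x y t [Wx Wx'] [Wy Wy'] t0 t1; split.
    exact: (convex_setP W).1 cW _ _ _ Wx Wy t0 t1.
  rewrite /= opprD -!scalerN; exact: (convex_setP W).1 cW _ _ _ Wx' Wy' t0 t1.
- apply: (filterI W_nbhs); apply: filterS (nbhs0N W_nbhs).
  by move=> _ [w Ww <-]; rewrite /= opprK.
- by move=> u [Wu Wu']; split; rewrite //= opprK.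
- by move=> u [/WN].
Qed.

Lemma lfun_continuous (L : Z -> R) (U : set Z) :
  (forall a x y, L (a *: x + y) = a * L x + L y) -> nbhs 0 U ->
  (forall u, U u -> `|L u| <= 1) -> continuous L.
Proof.
move=> L_linear U0 LU x; apply/cvgrPdist_lt => e e0.
have e20 : e / 2 != 0 by rewrite mulf_neq0 // gt_eqF.
apply: filterS (nbhsT x (nbhs0Z e20 U0)) => _ /= [_ [u Uu <-] <-].
rewrite (lfunD L_linear) (lfunZ L_linear) opprD addrA subrr add0r normrN normrM.
rewrite (@ger0_norm _ (e / 2)) ?divr_ge0 ?ltW //.
apply: (@le_lt_trans _ _ (e / 2)).
  by rewrite -[leRHS]mulr1; apply: ler_wpM2l; [rewrite divr_ge0 // ltW | exact: LU].
by rewrite ltr_pdivrMr // ltr_pMr // ltr1n.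
Qed.

(* The gauge of [K + U - k0] is a sublinear functional that is at least [1] at
   [- k0]; Hahn-Banach extends its value at [- k0] to a linear functional,
   continuous because it is bounded on [U]. *)
Lemma convex_separation (K N : set Z) (k0 : Z) :
  convex_set (K : set (convex_lmodType Z)) -> K k0 -> nbhs 0 N ->
  (forall k, K k -> ~ N k) ->
  exists L : Z -> R, is_dual L /\ exists2 e, 0 < e & forall k, K k -> L k <= - e.
Proof.
move=> cK Kk0 N0 KN.
have [U [cU U0 UN UsubN]] := nbhs0_convex_symmetric N0.
pose E := [set z : Z | exists k u, [/\ K k, U u & z = (k + u) + - k0]].
have EkU k u : K k -> U u -> E (k + u + - k0) by move=> Kk Uu; exists k, u.
have EU u : U u -> E u.
  by move=> Uu; rewrite -[u]addr0 -(subrr k0) addrCA addrA; exact: EkU.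
have cE : convex_set (E : set (convex_lmodType Z)).
  apply/convex_setP => _ _ t [k1 [u1 [K1 U1 ->]]] [k2 [u2 [K2 U2 ->]]] t0 t1.
  have -> : t *: (k1 + u1 + - k0) + (1 - t) *: (k2 + u2 + - k0) =
      (t *: k1 + (1 - t) *: k2) + (t *: u1 + (1 - t) *: u2) + - k0.
    by rewrite !scalerDr addrACA -scalerDl subrKC scale1r addrACA.
  apply: EkU; first exact: (convex_setP K).1 cK _ _ _ K1 K2 t0 t1.
  exact: (convex_setP U).1 cU _ _ _ U1 U2 t0 t1.
have E0 : E 0 by apply: EU; exact: nbhs_singleton.
have E_absorbing z : exists2 t, 0 < t & E (t *: z).
  by have [t t0 Ut] := nbhs0_absorbing U0 z; exists t => //; exact: EU.
have nEk0 : ~ E (- k0).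
  move=> [k [u [Kk Uu e]]].
  have /eqP : k + u = 0 by apply/(addIr (- k0)); rewrite add0r -e.
  rewrite addr_eq0 => /eqP ku.
  by apply: (KN k Kk); apply: UsubN; rewrite ku; exact: UN.
have [L [L_linear Lp Lk0]] := hahn_banach (- k0)
  (gauge_add cE E_absorbing) (gauge_scale E_absorbing).
have L1 : 1 <= L (- k0).
  by rewrite Lk0 leNgt; apply/negP => /(gauge_lt1 cE E0 E_absorbing).
have LU u : U u -> `|L u| <= 1.
  move=> Uu; rewrite ler_norml -lerNl -(lfunN L_linear).
  by apply/andP; split; apply: le_trans (Lp _) _; apply: gauge_le1;
    apply: EU => //; exact: UN.
have [e e0 Ue] := nbhs0_absorbing U0 (- k0).
exists L; split; first by split; [exact: L_linear | exact: lfun_continuous U0 LU].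
exists e => // k Kk.
have := le_trans (Lp _) (gauge_le1 (EkU _ _ Kk Ue)).
rewrite !(lfunD L_linear) (lfunZ L_linear).
have : e <= e * L (- k0) by rewrite ler_pMr.
lra.
Qed.

End TvsSeparation.

(** * C-convex maps and their difference quotients *)

Lemma not_closure_nbhs (T : topologicalType) (A : set T) (z : T) :
  ~ closure A z -> exists2 B, nbhs z B & forall a, A a -> ~ B a.
Proof.
move=> nAz; apply: contrapT => nB; apply: nAz => B Bz; apply: contrapT => nAB.
by apply: nB; exists B => // a Aa Ba; apply: nAB; exists a.
Qed.

Lemma conv_hull_convex (R : realType) (Z : tvsType R) (A : set Z) :
  convex_set (conv_hull A : set (convex_lmodType Z)).
Proof.
apply/convex_setP => x y t Ax Ay t0 t1 B cB AB.
exact: (convex_setP B).1 cB _ _ _ (Ax B cB AB) (Ay B cB AB) t0 t1.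
Qed.

Section DualHalfSpace.
Variables (R : realType) (Z : tvsType R) (zs : Z -> R) (e : R).
Hypothesis zs_dual : is_dual zs.

Lemma dual_halfspace_convex :
  convex_set ([set z | zs z <= e] : set (convex_lmodType Z)).
Proof.
apply/convex_setP => x y t /= zx zy t0 t1.
rewrite (lfunD zs_dual.1) !(lfunZ zs_dual.1).
have t1' : 0 <= 1 - t by rewrite subr_ge0.
have := lerD (ler_wpM2l t0 zx) (ler_wpM2l t1' zy).
by rewrite -mulrDl subrKC mul1r.
Qed.

Lemma dual_halfspace_closed : closed [set z | zs z <= e].
Proof.
apply: (@preimage_closed Z R^o zs [set r | r <= e]); last exact: closed_le.
by move=> y _; exact: zs_dual.2.
Qed.

End DualHalfSpace.

Lemma convex_segment (R : realType) (X : lmodType R) (S : set X) (x0 x : X) t :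
  convex_set (S : set (convex_lmodType X)) -> S x0 -> S x ->
  0 <= t -> t <= 1 -> S (x0 + t *: (x - x0)).
Proof.
move=> cS Sx0 Sx t0 t1; have := (convex_setP S).1 cS _ _ _ Sx Sx0 t0 t1.
by rewrite scalerBr scalerBl scale1r addrCA.
Qed.

Lemma convex_cone_add (R : realType) (Z : tvsType R) (C : set Z) :
  convex_set (C : set (convex_lmodType Z)) -> is_cone C ->
  forall c1 c2, C c1 -> C c2 -> C (c1 + c2).
Proof.
move=> cC coneC c1 c2 C1 C2.
have h0 : (0 : R) <= 2^-1 by rewrite invr_ge0 ler0n.
have h1 : (2 : R)^-1 <= 1 by rewrite invf_le1 ?ler1n ?ltr0n.
have := (convex_setP C).1 cC _ _ _ C1 C2 h0 h1.
have -> : 1 - (2 : R)^-1 = 2^-1 by field.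
rewrite -scalerDr => /(coneC _ 2) /(_ (ltr0Sn R 1)).
by rewrite scalerA mulfV ?pnatr_eq0 // scale1r.
Qed.

Lemma dual_le0_cone_translate (R : realType) (Z : tvsType R) (C : set Z)
    (L : Z -> R) (w : Z) (b : R) :
  is_dual L -> is_cone C -> (forall c, C c -> L (w + c) <= b) ->
  forall c, C c -> L c <= 0.
Proof.
move=> [L_linear _] coneC Lb c Cc; rewrite leNgt; apply/negP => Lc0.
pose s := (`|b - L w| + 1) / L c.
have s0 : 0 < s by rewrite divr_gt0 // ltr_wpDl.
have := Lb _ (coneC _ _ Cc s0).
rewrite (lfunD L_linear) (lfunZ L_linear) /s divfK ?gt_eqF //.
have := ler_norm (b - L w); lra.
Qed.

Lemma psiC_neq_setT (R : realType) (X : lmodType R) (Z : tvsType R)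
    (C : set Z) (S : set X) (psi : X -> Z) (x : X) :
  (exists2 zs, neg_polar C zs & zs <> (fun _ => 0)) -> psiC C S psi x <> setT.
Proof.
move=> [zs [[zs_linear _] zsC] zs_neq0] fxT; apply: zs_neq0; apply: funext => z.
have Cz w : C w.
  have : psiC C S psi x (psi x + w) by rewrite fxT.
  by move=> [_ [c Cc /addrI ->]].
have := zsC _ (Cz z); have := zsC _ (Cz (- z)); rewrite (lfunN zs_linear); lra.
Qed.

Lemma ediff_EFin (R : realType) (r s : R) : ediff r%:E s%:E = (r - s)%:E.
Proof.
apply/eqP; rewrite eq_le; apply/andP; split.
  by apply: ereal_inf_lbound; exists (r - s); rewrite //= /dual_adde /= addrC subrK.
apply: le_ereal_inf_tmp => _ [t /= + <-].
by rewrite /dual_adde /= !lee_fin lerBlDl.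
Qed.

Lemma ediff_pinfty_EFin (R : realType) (s : R) : ediff +oo%E s%:E = +oo%E.
Proof.
apply/eqP; rewrite eq_le leey /=; apply: le_ereal_inf_tmp => _ [t /= + <-].
by rewrite /dual_adde /= leye_eq.
Qed.

Lemma ereal_gt0_EFin_le (R : realType) (m : \bar R) : (0 < m)%E ->
  exists2 e : R, 0 < e & (e%:E <= m)%E.
Proof.
case: m => [r||] //=; first by rewrite lte_fin => r0; exists r.
by move=> _; exists 1; rewrite ?ltr01 ?leey.
Qed.

Definition diffquot (R : realType) (X : lmodType R) (Z : tvsType R)
    (f : X -> set Z) (x u : X) (t : R) : set Z :=
  scale_set t^-1 (mdiff (f (x + t *: u)) (f x)).

Definition phi_quot (R : realType) (X : lmodType R) (phi : X -> \bar R)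
    (x u : X) (t : R) : \bar R :=
  ((t^-1)%:E * ediff (phi (x + t *: u)%R) (phi x))%E.

Section CConvexMap.
Variables (R : realType) (X : lmodType R) (Z : tvsType R) (C : set Z).
Variables (S : set X) (psi : X -> Z) (x0 : X).
Hypotheses (C_cvx : convex_set (C : set (convex_lmodType Z))) (C_cone : is_cone C).
Hypotheses (C0 : C 0) (psi_cvx : C_convex C S psi) (Sx0 : S x0).
Local Notation f := (psiC C S psi).

(* [zs \o psi] is concave along segments because [zs <= 0] on [C]. *)
Lemma polar_slope_le zs u s t : neg_polar C zs -> 0 < t -> t <= s ->
  S (x0 + s *: u) ->
  s^-1 * (zs (psi (x0 + s *: u)) - zs (psi x0)) <=
  t^-1 * (zs (psi (x0 + t *: u)) - zs (psi x0)).
Proof.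
move=> [[zs_linear _] zsC] t0 ts Ss.
have s0 : 0 < s by exact: lt_le_trans ts.
have l01 : 0 <= t / s <= 1.
  by apply/andP; split; [rewrite divr_ge0 // ltW | rewrite ler_pdivrMr // mul1r].
have [c Cc] := psi_cvx.2 _ _ _ Sx0 Ss l01.
rewrite addrAC subrr add0r scalerA divfK ?gt_eqF // => /(congr1 zs).
rewrite !(lfunD zs_linear) !(lfunZ zs_linear) => e.
have := zsC _ Cc; move: e.
move: (zs (psi x0)) (zs (psi (x0 + s *: u))) (zs (psi (x0 + t *: u))) (zs c).
move=> a b d g e g0.
have h : t / s * (b - a) <= d - a.
  have -> : t / s * (b - a) = (1 - t / s) * a + t / s * b - a by ring.
  lra.
have -> : s^-1 * (b - a) = t^-1 * (t / s * (b - a)).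
  by rewrite mulrA mulKf ?gt_eqF.
by rewrite ler_wpM2l // invr_ge0 ltW.
Qed.

Lemma diffquot_polar_le zs u t z : neg_polar C zs -> 0 < t ->
  diffquot f x0 u t z ->
  S (x0 + t *: u) /\ zs z <= t^-1 * (zs (psi (x0 + t *: u)) - zs (psi x0)).
Proof.
move=> [[zs_linear _] zsC] t0 [w fw <-].
have [Sxt [c Cc e]] : f (x0 + t *: u) (psi x0 + w).
  by apply: fw; split => //; exists 0; rewrite ?addr0.
split => //; rewrite (lfunZ zs_linear).
apply: ler_wpM2l; first by rewrite invr_ge0 ltW.
have := congr1 zs e; rewrite !(lfunD zs_linear).
have := zsC _ Cc; lra.
Qed.

Lemma diffquot_mem u t c : S (x0 + t *: u) -> C c ->
  diffquot f x0 u t (t^-1 *: (psi (x0 + t *: u) - psi x0 + c)).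
Proof.
move=> Sxt Cc; exists (psi (x0 + t *: u) - psi x0 + c) => //.
move=> _ [_ [c' Cc' ->]]; split => //; exists (c' + c).
  exact: convex_cone_add.
by rewrite addrACA subrKC.
Qed.

Lemma phi_quot_mem zs u t : S (x0 + t *: u) ->
  phi_quot (phi_f S psi zs) x0 u t =
  (t^-1 * (zs (psi x0) - zs (psi (x0 + t *: u))))%:E.
Proof. by move=> Sxt; rewrite /phi_quot /phi_f !asboolT // ediff_EFin opprK addrC. Qed.

Lemma phi_quot_notin zs u t : 0 < t -> ~ S (x0 + t *: u) ->
  phi_quot (phi_f S psi zs) x0 u t = +oo%E.
Proof.
move=> t0 nSxt; rewrite /phi_quot /phi_f asboolF // asboolT // ediff_pinfty_EFin.
by rewrite gt0_muley // lte_fin invr_gt0.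
Qed.

Lemma phider_geP zs u e :
  (e%:E <= phider (phi_f S psi zs) x0 u)%E <->
  forall t, 0 < t -> S (x0 + t *: u) ->
    e <= t^-1 * (zs (psi x0) - zs (psi (x0 + t *: u))).
Proof.
split=> [e_le t t0 Sxt|e_le].
  have := le_trans e_le (ereal_inf_lbound (ex_intro2 _ _ t t0 erefl)).
  by rewrite -/(phi_quot _ _ _ t) phi_quot_mem // lee_fin.
apply: le_ereal_inf_tmp => _ [t /= t0 <-]; rewrite -/(phi_quot _ _ _ t).
have [Sxt|nSxt] := pselect (S (x0 + t *: u)); last by rewrite phi_quot_notin // leey.
by rewrite phi_quot_mem // lee_fin; exact: e_le.
Qed.

Lemma phider_gt0_setder_notin0 zs u : neg_polar C zs ->
  (0 < phider (phi_f S psi zs) x0 u)%E -> ~ setder f x0 u 0.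
Proof.
move=> zs_polar /ereal_gt0_EFin_le[e e0 /phider_geP e_le] /(_ 1 ltr01).
pose H := [set z : Z | zs z <= - e].
have quotH : \bigcup_(t in [set t : R | 0 < t < 1]) diffquot f x0 u t `<=` H.
  move=> z [t /andP[t0 _] /(diffquot_polar_le zs_polar t0)[Sxt zs_z]].
  by rewrite /H /=; have := e_le t t0 Sxt; lra.
have /closureS : conv_hull (\bigcup_(t in [set t : R | 0 < t < 1])
    diffquot f x0 u t) `<=` H.
  by move=> z; apply; [exact: dual_halfspace_convex zs_polar.1 | exact: quotH].
move=> /[apply] /(dual_halfspace_closed zs_polar.1).
by rewrite /= (lfun0 zs_polar.1.1); lra.
Qed.

(* Separate [0] from the convex hull of the difference quotients over
   [0 < t < t0]; the separating functional is nonpositive on [C] since every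
   quotient set is stable under adding [t^-1 *: C], and concavity along the
   segment turns its bound on small [t] into a bound on all [t]. *)
Lemma setder_notin0_phider_gt0 u :
  (forall t, 0 <= t -> t <= 1 -> S (x0 + t *: u)) -> ~ setder f x0 u 0 ->
  exists2 zs, neg_polar C zs /\ zs <> (fun _ => 0) &
    (0 < phider (phi_f S psi zs) x0 u)%E.
Proof.
move=> Su not_setder.
have [t0 t00 not_cl] : exists2 t0 : R, 0 < t0 & ~ closure (conv_hull
    (\bigcup_(t in [set t : R | 0 < t < t0]) diffquot f x0 u t)) 0.
  apply: contrapT => h; apply: not_setder => t0 t00; apply: contrapT => nc.
  by apply: h; exists t0.
set K := conv_hull _ in not_cl.
have [B B0 KB] := not_closure_nbhs not_cl.
pose m s := Num.min s (Num.min t0 1 / 2).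
have m_facts s : 0 < s -> [/\ 0 < m s, m s <= s, m s < t0 & m s <= 1].
  move=> s0; have h0 : 0 < Num.min t0 1 by rewrite lt_min t00 ltr01.
  have hlt : Num.min t0 1 / 2 < Num.min t0 1 by rewrite ltr_pdivrMr // ltr_pMr ?ltr1n.
  have hm : m s <= Num.min t0 1 / 2 by rewrite ge_min lexx orbT.
  split; first by rewrite lt_min s0 divr_gt0.
  - by rewrite ge_min lexx.
  - by apply: le_lt_trans hm (lt_le_trans hlt _); rewrite ge_min lexx.
  - by apply/ltW/(le_lt_trans hm)/(lt_le_trans hlt); rewrite ge_min lexx orbT.
have Km s c : 0 < s -> C c ->
    K ((m s)^-1 *: (psi (x0 + m s *: u) - psi x0 + c)).
  move=> s0 Cc; have [m0 _ mt0 m1] := m_facts s s0.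
  move=> A cA sub; apply: sub; exists (m s); first by rewrite /= m0 mt0.
  exact/diffquot_mem/Cc/Su/m1/ltW.
have [L [L_dual [e e0 Le]]] := convex_separation (@conv_hull_convex _ _ _)
  (Km 1 0 ltr01 C0) B0 KB.
have [m0 _ _ _] := m_facts 1 ltr01.
have LC : forall c, C c -> L c <= 0.
  apply: (dual_le0_cone_translate (b := - e * m 1) L_dual C_cone) => c Cc.
  have := Le _ (Km 1 c ltr01 Cc).
  by rewrite (lfunZ L_dual.1) -(ler_pM2l m0) mulrA mulfV ?gt_eqF // mul1r; lra.
exists L.
  split; first by split.
  by move=> L0; have := Le _ (Km 1 0 ltr01 C0); rewrite L0; lra.
apply: (@lt_le_trans _ _ e%:E); first by rewrite lte_fin.
apply/phider_geP => t t0' Sxt; have [ms0 mst _ _] := m_facts t t0'.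
have := polar_slope_le (conj L_dual LC) ms0 mst Sxt.
have := Le _ (Km t 0 t0' C0).
rewrite addr0 (lfunZ L_dual.1) (lfunD L_dual.1) (lfunN L_dual.1).
rewrite -opprB mulrN; lra.
Qed.

Lemma diffquot_psi_negC x c t : S x -> C c -> psi x0 = psi x + c ->
  0 < t -> t <= 1 -> C (- (t^-1 *: (psi (x0 + t *: (x - x0)) - psi x0))).
Proof.
move=> Sx Cc e t0 t1.
have t01 : 0 <= t <= 1 by rewrite ltW.
have [c1 Cc1] := psi_cvx.2 _ _ _ Sx0 Sx t01.
have -> : psi x = psi x0 - c by rewrite e addrK.
rewrite scalerBr scalerBl scale1r addrA subrK => e1.
have -> : psi (x0 + t *: (x - x0)) = psi x0 - (t *: c + c1).
  by rewrite opprD addrA e1 addrK.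
rewrite addrAC subrr add0r scalerN opprK scalerDr scalerA mulVf ?gt_eqF // scale1r.
by apply: convex_cone_add => //; apply: C_cone; rewrite ?invr_gt0.
Qed.

Lemma dini_fin_negC x c z : closed C -> S x -> C c -> psi x0 = psi x + c ->
  dini_fin psi x0 (x - x0) z -> [set - c | c in C] z.
Proof.
move=> C_closed Sx Cc e [t [t_gt0 _ t_cvg quot_cvg]].
exists (- z); last by rewrite opprK.
have negC_closed : closed [set w : Z | C (- w)].
  by apply: preimage_closed => // w _; exact: opp_continuous.
apply: (@closed_cvg _ Z _ _ _ _ negC_closed _ z quot_cvg).
near=> n; apply: (diffquot_psi_negC Sx Cc e (t_gt0 n)); apply: ltW.
by near: n; exact: cvgr_lt _ t_cvg _ ltr01.
Unshelve. all: by end_near.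
Qed.

Lemma efficient_of_dini : closed C ->
  (forall x, S x -> psi x <> psi x0 ->
    exists z, dini_fin psi x0 (x - x0) z /\ ~ [set - c | c in C] z) ->
  efficient C S psi x0.
Proof.
move=> C_closed dini _ [x Sx <-] [c Cc e]; exists c => //; split => //.
have [ex|nex] := pselect (psi x = psi x0).
  exists 0 => //; rewrite oppr0.
  by apply/(addrI (psi x)); rewrite addr0 -e ex.
have [z [z_dini z_notin]] := dini x Sx nex.
by case: z_notin; exact: dini_fin_negC Sx Cc e z_dini.
Qed.

End CConvexMap.

Theorem mainTheorem16 (R : realType) (X : lmodType R) (Z : tvsType R)
    (C : set Z) (S : set X) (psi : X -> Z) (x0 : X) :
  hausdorff_space Z ->
  closed C -> convex_set (C : set (convex_lmodType Z)) -> is_cone C -> C 0 ->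
  (exists2 zs, neg_polar C zs & zs <> (fun _ => 0)) ->
  C_convex C S psi -> S x0 ->
  let f := psiC C S psi in
  let cond_i :=
    f x0 = setT \/
    forall x, S x -> f x <> f x0 -> ~ setder f x0 (x - x0) 0 in
  let cond_ii :=
    f x0 = setT \/
    forall x, S x -> f x <> f x0 ->
      exists2 zs, neg_polar C zs /\ zs <> (fun _ => 0) &
        (0 < phider (phi_f S psi zs) x0 (x - x0))%E in
  let cond_iii :=
    forall x, S x -> f x0 <> f x ->
      exists2 zs, neg_polar C zs /\ zs <> (fun _ => 0) &
        ((-oo = phi_f S psi zs x0 /\ phi_f S psi zs x0 < phi_f S psi zs x)
         \/ 0 < phider (phi_f S psi zs) x0 (x - x0))%E in
  (cond_i <-> cond_ii) /\ (cond_ii <-> cond_iii) /\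
  ((forall x, S x -> psi x <> psi x0 ->
      exists z, dini_fin psi x0 (x - x0) z /\ ~ [set - c | c in C] z) ->
   efficient C S psi x0).
Proof.
move=> _ C_closed C_cvx C_cone C0 polar_ex psi_cvx Sx0 f cond_i cond_ii cond_iii.
have fx0_neqT : f x0 <> setT := psiC_neq_setT polar_ex.
split; [|split].
- split=> -[fx0T|h]; [by left | right=> x Sx fx | by left | right=> x Sx fx].
    move: (h x Sx fx); apply: setder_notin0_phider_gt0 => //.
    by move=> t; exact: convex_segment psi_cvx.1 Sx0 Sx.
  have [zs [zs_polar _] zs_pos] := h x Sx fx.
  exact: phider_gt0_setder_notin0 zs_polar zs_pos.
- split=> [[/fx0_neqT[]|h] x Sx fx|h].
    by have [zs zs_polar zs_pos] := h x Sx (nesym fx); exists zs => //; right.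
  right=> x Sx fx; have [zs zs_polar [[phi_x0 _]|]] := h x Sx (nesym fx).
    by move: phi_x0; rewrite /phi_f asboolT.
  by exists zs.
- exact: efficient_of_dini.
Qed.
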